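(* Let $g \ge h \ge 2$ be integers. There is a constant $C>0$ depending only on $g$ and $h$ such that for every infinite $C_h[g]$ set $A$ of positive integers, $$\liminf_{x \to \infty} A(x)\cdot \frac{(x\log x)^{1/h}}{x} \le C,$$ where $A(x) = |\{a \in A : a \le x\}|$ is the counting function of $A$.
   Context: A set of integers $A$ is called a $C_h[g]$ set if for every set $X$ of $h$ integers there do not exist $g$ distinct integers $k_1,\dots,k_g$ such that $X+k_i \subset A$ for all $i=1,\dots,g$ (here $X+k=\{x+k : x\in X\}$). In words, $A$ contains no $g$ distinct translates of a common $h$-element set. *)

From Stdlib Require Import Reals ZArith List Arith.
Import ListNotations.
Open Scope R_scope.

(* A set of positive integers is encoded by its boolean indicator on nat;
   membership of an integer z in A: z >= 1 and A z. *)
Definition memZ (A : nat -> bool) (z : Z) : Prop :=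
  (0 < z)%Z /\ A (Z.to_nat z) = true.

Definition Chg (h g : nat) (A : nat -> bool) : Prop :=
  forall (X K : list Z),
    NoDup X -> length X = h -> NoDup K -> length K = g ->
    ~ (forall k x, In k K -> In x X -> memZ A (x + k)%Z).

Definition infinite_set (A : nat -> bool) : Prop :=
  forall N : nat, exists n, (N < n)%nat /\ A n = true.

Definition count_upto (A : nat -> bool) (N : nat) : nat :=
  length (filter A (seq 1 N)).

Definition countR (A : nat -> bool) (x : R) : R :=
  INR (count_upto A (Z.to_nat (Int_part x))).

(* liminf_{x -> +oo} f x <= C, unfolded *)
Definition liminf_le (f : R -> R) (C : R) : Prop :=
  forall eps : R, 0 < eps -> forall M : R, exists x : R, M < x /\ f x < C + eps.

(* Write [h = k + 1] and [w_T(t) = |A ∩ (t, t + T]|]. The [h]-tuples of distinct elements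
   of [(0, T]] lying in [A - t] are counted at most [g - 1] times over the shifts [t], so the
   [C_h[g]] property gives [sum_(t < Y) w_T(t)^h <= 2 g T^h + O_h(Y)]. Choose [rho] with
   [rho^h = 2^-k] and weight [n] by [rho^(log2 n)]: Hölder's inequality bounds
   [F = sum_(2^p <= n < 2^J, n in A) rho^(log2 n)] by [F^h = O(J^k)] when [J = h p].
   If the liminf exceeded [C], then eventually [C^h N^k <= A(N)^h log N], so
   [rho^j A(2^j) >= C (2^k J)^(-1/h)] for [p < j <= J], and Abel summation gives
   [F >> C J^(k/h)], which contradicts the upper bound once [C] is large. *)

From Stdlib Require Import Reals ZArith List Arith.
From Stdlib Require Import Lia Lra FinFun Classical.
Import ListNotations.
Open Scope R_scope.

Section Counting.
Local Open Scope nat_scope.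
Local Open Scope bool_scope.

Fixpoint tuples (s : list nat) (n : nat) : list (list nat) :=
  match n with
  | 0 => [[]]
  | S n => flat_map (fun x => map (cons x) (tuples s n)) s
  end.

Fixpoint nodupb (l : list nat) : bool :=
  match l with
  | [] => true
  | x :: l => negb (existsb (Nat.eqb x) l) && nodupb l
  end.

Definition countb {X} (P : X -> bool) (l : list X) : nat :=
  list_sum (map (fun x => if P x then 1 else 0) l).

Lemma nodupb_NoDup l : nodupb l = true -> NoDup l.
Proof.
  induction l as [|x l IH]; simpl; intros H; [constructor|].
  apply andb_prop in H as [Hx Hl]. constructor; auto.
  intros Hin. apply Bool.negb_true_iff in Hx.
  enough (existsb (Nat.eqb x) l = true) by congruence.
  apply existsb_exists. exists x. split; auto. apply Nat.eqb_refl.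
Qed.

Lemma tuples_In s n o :
  In o (tuples s n) -> length o = n /\ forall x, In x o -> In x s.
Proof.
  revert o; induction n as [|n IH]; simpl; intros o H.
  - destruct H as [<-|[]]. split; auto. intros _ [].
  - apply in_flat_map in H as [x [Hx H]]. apply in_map_iff in H as [o' [<- Ho']].
    destruct (IH _ Ho') as [Hlen Hin]. simpl. split; auto. intros y [->|Hy]; auto.
Qed.

Lemma list_sum_map_le {X} (f g : X -> nat) l :
  (forall x, In x l -> f x <= g x) -> list_sum (map f l) <= list_sum (map g l).
Proof.
  induction l as [|a l IH]; simpl; intros H; auto.
  specialize (IH (fun x Hx => H x (or_intror Hx))). specialize (H a (or_introl eq_refl)). lia.
Qed.

Lemma list_sum_map_add {X} (f g : X -> nat) l :
  list_sum (map (fun x => f x + g x) l) = list_sum (map f l) + list_sum (map g l).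
Proof. induction l; simpl; lia. Qed.

Lemma list_sum_map_scal {X} (c : nat) (f : X -> nat) l :
  list_sum (map (fun x => c * f x) l) = c * list_sum (map f l).
Proof. induction l; simpl; lia. Qed.

Lemma list_sum_map_const {X} (c : nat) (l : list X) :
  list_sum (map (fun _ => c) l) = c * length l.
Proof. induction l; simpl; lia. Qed.

Lemma list_sum_map_flat_map {X Y} (f : Y -> nat) (g : X -> list Y) l :
  list_sum (map f (flat_map g l)) = list_sum (map (fun x => list_sum (map f (g x))) l).
Proof. induction l; simpl; auto. rewrite map_app, list_sum_app. lia. Qed.

Lemma list_sum_map_swap {X Y} (f : X -> Y -> nat) l1 l2 :
  list_sum (map (fun x => list_sum (map (f x) l2)) l1) =
  list_sum (map (fun y => list_sum (map (fun x => f x y) l1)) l2).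
Proof.
  induction l1 as [|a l1 IH]; simpl.
  - induction l2; simpl; auto.
  - rewrite IH, <- list_sum_map_add. reflexivity.
Qed.

Lemma countb_length_filter {X} (P : X -> bool) l : countb P l = length (filter P l).
Proof. induction l as [|a l IH]; unfold countb in *; simpl; auto. destruct (P a); simpl; lia. Qed.

Lemma countb_app {X} (P : X -> bool) l1 l2 : countb P (l1 ++ l2) = countb P l1 + countb P l2.
Proof. unfold countb. rewrite map_app, list_sum_app. reflexivity. Qed.

Lemma countb_split {X} (P Q : X -> bool) l :
  countb P l = countb (fun x => P x && Q x) l + countb (fun x => P x && negb (Q x)) l.
Proof. induction l as [|a l IH]; unfold countb in *; simpl; auto. destruct (P a), (Q a); simpl; lia. Qed.

Lemma countb_existsb_le (s o : list nat) :
  NoDup s -> countb (fun x => existsb (Nat.eqb x) o) s <= length o.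
Proof.
  intros Hs. rewrite countb_length_filter. apply NoDup_incl_length; [now apply NoDup_filter|].
  intros x Hx. apply filter_In in Hx as [_ Hx]. apply existsb_exists in Hx as [y [Hy E]].
  apply Nat.eqb_eq in E. now subst.
Qed.

Lemma countb_tuples_forallb (q : nat -> bool) s n :
  countb (forallb q) (tuples s n) = countb q s ^ n.
Proof.
  induction n as [|n IH]; [reflexivity|].
  simpl. unfold countb at 1. rewrite list_sum_map_flat_map.
  transitivity (list_sum (map (fun x => (if q x then 1 else 0) * countb q s ^ n) s)).
  - f_equal. apply map_ext. intros x. rewrite <- IH. unfold countb.
    rewrite map_map. simpl. destruct (q x); simpl; [lia|].
    rewrite list_sum_map_const. lia.
  - rewrite (Nat.mul_comm (countb q s)). unfold countb.
    rewrite <- list_sum_map_scal. f_equal. apply map_ext. intros x. lia.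
Qed.

Lemma countb_tuples_not_nodupb_succ (q : nat -> bool) s n : NoDup s ->
  countb (fun o => forallb q o && negb (nodupb o)) (tuples s (S n)) <=
  countb q s * countb (fun o => forallb q o && negb (nodupb o)) (tuples s n)
  + n * countb q s ^ n.
Proof.
  intros Hs. simpl. unfold countb at 1. rewrite list_sum_map_flat_map.
  set (B := countb (fun o => forallb q o && negb (nodupb o)) (tuples s n)).
  eapply Nat.le_trans.
  { apply list_sum_map_le with (g := fun x => (if q x then 1 else 0) * B +
        list_sum (map (fun o => if q x && forallb q o && existsb (Nat.eqb x) o then 1 else 0)
                      (tuples s n))).
    intros x _. rewrite map_map. simpl. unfold B, countb.
    destruct (q x); simpl.
    - rewrite Nat.add_0_r, <- list_sum_map_add. apply list_sum_map_le. intros o _.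
      destruct (forallb q o), (existsb (Nat.eqb x) o), (nodupb o); simpl; lia.
    - rewrite list_sum_map_const. lia. }
  rewrite list_sum_map_add. apply Nat.add_le_mono.
  - rewrite (Nat.mul_comm (countb q s)). unfold countb.
    rewrite <- list_sum_map_scal. apply Nat.eq_le_incl. f_equal. apply map_ext. intros x. lia.
  - rewrite list_sum_map_swap, <- countb_tuples_forallb. unfold countb.
    rewrite <- list_sum_map_scal. apply list_sum_map_le. intros o Ho.
    destruct (tuples_In _ _ _ Ho) as [Hlen _].
    destruct (forallb q o).
    + rewrite Nat.mul_1_r, <- Hlen. eapply Nat.le_trans; [|apply (countb_existsb_le s o Hs)].
      apply list_sum_map_le. intros x _. destruct (q x), (existsb (Nat.eqb x) o); simpl; lia.
    + rewrite Nat.mul_0_r. transitivity (list_sum (map (fun _ : nat => 0) s)).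
      * apply list_sum_map_le. intros x _. now rewrite Bool.andb_false_r.
      * rewrite list_sum_map_const. lia.
Qed.

Lemma countb_tuples_not_nodupb (q : nat -> bool) s n : NoDup s ->
  countb (fun o => forallb q o && negb (nodupb o)) (tuples s (S n)) <=
  S n * S n * countb q s ^ n.
Proof.
  intros Hs. induction n as [|n IH].
  - simpl. unfold countb. simpl. induction s as [|a s IHs]; simpl; auto.
    rewrite Bool.andb_true_r. inversion Hs; subst. specialize (IHs H2).
    destruct (q a); simpl in *; lia.
  - eapply Nat.le_trans; [apply countb_tuples_not_nodupb_succ; auto|].
    set (c := countb q s) in *. simpl (c ^ S n).
    eapply Nat.le_trans; [apply Nat.add_le_mono_r, Nat.mul_le_mono_l, IH|]. nia.
Qed.

End Counting.

Section WindowCounts.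
Local Open Scope nat_scope.
Local Open Scope bool_scope.

Variable A : nat -> bool.

Definition window_count (T t : nat) : nat := countb (fun x => A (t + x)) (seq 1 T).

Lemma Chg_translates_lt h g Y o : Chg h g A ->
  length o = h -> NoDup o -> (forall x, In x o -> 1 <= x) ->
  countb (fun t => forallb (fun x => A (t + x)) o) (seq 0 Y) < g.
Proof.
  intros HC Ho Do Po. rewrite countb_length_filter.
  set (K := filter _ (seq 0 Y)).
  destruct (Nat.lt_ge_cases (length K) g) as [Hlt|Hge]; auto. exfalso.
  assert (DK : NoDup K) by apply NoDup_filter, seq_NoDup.
  pose proof (firstn_skipn g K) as FS.
  apply (HC (map Z.of_nat o) (map Z.of_nat (firstn g K))).
  - apply Injective_map_NoDup; auto. intros a b; lia.
  - now rewrite length_map.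
  - apply Injective_map_NoDup; [intros a b; lia|].
    rewrite <- FS in DK. eapply NoDup_app_remove_r; eauto.
  - rewrite length_map. now apply firstn_length_le.
  - intros k x Hk Hx. apply in_map_iff in Hk as [k' [<- Hk']].
    apply in_map_iff in Hx as [x' [<- Hx']].
    assert (Hk2 : In k' K) by (rewrite <- FS; apply in_or_app; auto).
    apply filter_In in Hk2 as [_ Hf]. rewrite forallb_forall in Hf.
    specialize (Hf x' Hx'). specialize (Po x' Hx'). split; [lia|].
    now replace (Z.to_nat (Z.of_nat x' + Z.of_nat k')) with (k' + x') by lia.
Qed.

(* Each tuple of distinct shifts fits into fewer than [g] translates of [A]. *)
Lemma sum_countb_tuples_nodupb_le h g T Y : Chg h g A ->
  list_sum (map (fun t => countb (fun o => forallb (fun x => A (t + x)) o && nodupb o)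
                                 (tuples (seq 1 T) h)) (seq 0 Y)) <= g * T ^ h.
Proof.
  intros HC. unfold countb at 1. rewrite list_sum_map_swap.
  eapply Nat.le_trans; [apply list_sum_map_le with (g := fun _ => g)|].
  - intros o Ho. destruct (tuples_In _ _ _ Ho) as [Hlen Hin].
    destruct (nodupb o) eqn:E.
    + apply Nat.lt_le_incl.
      eapply Nat.le_lt_trans; [|apply (Chg_translates_lt h g Y o HC Hlen (nodupb_NoDup _ E))].
      * apply list_sum_map_le. intros t _. destruct (forallb _ o); simpl; lia.
      * intros x Hx. apply Hin, in_seq in Hx. lia.
    + transitivity (list_sum (map (fun _ : nat => 0) (seq 0 Y))).
      * apply list_sum_map_le. intros t _. now rewrite Bool.andb_false_r.
      * rewrite list_sum_map_const. lia.
  - rewrite list_sum_map_const. apply Nat.mul_le_mono_l.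
    pose proof (countb_tuples_forallb (fun _ => true) (seq 1 T) h) as E.
    rewrite !countb_length_filter in E.
    rewrite (filter_ext _ (fun _ => true)) in E by (intros; apply forallb_forall; auto).
    rewrite !filter_true, length_seq in E. lia.
Qed.

Lemma mul_pow_le_pow_succ_add a c n : a * c ^ n <= c ^ S n + a ^ S n.
Proof.
  rewrite !Nat.pow_succ_r'.
  destruct (Nat.le_gt_cases a c) as [H|H].
  - assert (a * c ^ n <= c * c ^ n) by (apply Nat.mul_le_mono_r; lia). lia.
  - assert (c ^ n <= a ^ n) by (apply Nat.pow_le_mono_l; lia).
    assert (a * c ^ n <= a * a ^ n) by (apply Nat.mul_le_mono_l; lia). lia.
Qed.

Lemma sum_window_count_pow_le h g T Y : 1 <= h -> Chg h g A ->
  list_sum (map (fun t => window_count T t ^ h) (seq 0 Y))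
  <= 2 * g * T ^ h + Y * (2 * (h * h)) ^ h.
Proof.
  intros Hh HC.
  eapply Nat.le_trans; [apply list_sum_map_le with (g := fun t =>
    2 * countb (fun o => forallb (fun x => A (t + x)) o && nodupb o) (tuples (seq 1 T) h)
    + (2 * (h * h)) ^ h)|].
  - intros t _. unfold window_count. rewrite <- countb_tuples_forallb, (countb_split _ nodupb).
    destruct h as [|n]; [lia|].
    pose proof (countb_tuples_not_nodupb (fun x => A (t + x)) (seq 1 T) n (seq_NoDup _ _)).
    pose proof (mul_pow_le_pow_succ_add (2 * (S n * S n)) (countb (fun x => A (t + x)) (seq 1 T)) n).
    pose proof (countb_tuples_forallb (fun x => A (t + x)) (seq 1 T) (S n)) as E.
    rewrite (countb_split _ nodupb) in E. lia.
  - rewrite list_sum_map_add, list_sum_map_scal, list_sum_map_const, length_seq.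
    pose proof (sum_countb_tuples_nodupb_le h g T Y HC). nia.
Qed.

End WindowCounts.

Fixpoint rsum (f : nat -> R) (n : nat) : R :=
  match n with O => 0 | S n => rsum f n + f n end.

Definition b2R (b : bool) : R := if b then 1 else 0.

Lemma b2R_ge0 b : 0 <= b2R b.
Proof. destruct b; simpl; lra. Qed.

Lemma rsum_ext f g n : (forall i, (i < n)%nat -> f i = g i) -> rsum f n = rsum g n.
Proof. induction n as [|n IH]; simpl; intros H; auto. rewrite IH, H; auto. Qed.

Lemma rsum_le f g n : (forall i, (i < n)%nat -> f i <= g i) -> rsum f n <= rsum g n.
Proof.
  induction n as [|n IH]; simpl; intros H; [lra|].
  assert (f n <= g n) by auto. assert (rsum f n <= rsum g n) by auto. lra.
Qed.

Lemma rsum_const c n : rsum (fun _ => c) n = INR n * c.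
Proof. induction n as [|n IH]; simpl rsum; [simpl; lra|]. rewrite IH, S_INR. lra. Qed.

Lemma rsum_ge0 f n : (forall i, (i < n)%nat -> 0 <= f i) -> 0 <= rsum f n.
Proof. intros H. rewrite <- (Rmult_0_r (INR n)), <- rsum_const. now apply rsum_le. Qed.

Lemma rsum_add f g n : rsum (fun i => f i + g i) n = rsum f n + rsum g n.
Proof. induction n as [|n IH]; simpl; [lra|]. rewrite IH. lra. Qed.

Lemma rsum_scal c f n : rsum (fun i => c * f i) n = c * rsum f n.
Proof. induction n as [|n IH]; simpl; [lra|]. rewrite IH. lra. Qed.

Lemma rsum_add_range f a b : rsum f (a + b) = rsum f a + rsum (fun i => f (a + i)%nat) b.
Proof.
  induction b as [|b IH]; simpl; [rewrite Nat.add_0_r; lra|].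
  rewrite Nat.add_succ_r. simpl. rewrite IH. lra.
Qed.

Lemma rsum_le_range f a b : (forall i, 0 <= f i) -> (a <= b)%nat -> rsum f a <= rsum f b.
Proof.
  intros H Hab. replace b with (a + (b - a))%nat by lia. rewrite rsum_add_range.
  assert (0 <= rsum (fun i => f (a + i)%nat) (b - a)) by (apply rsum_ge0; auto). lra.
Qed.

Lemma rsum_swap (f : nat -> nat -> R) a b :
  rsum (fun t => rsum (f t) b) a = rsum (fun x => rsum (fun t => f t x) a) b.
Proof.
  induction a as [|a IH]; simpl.
  - rewrite rsum_const. ring.
  - rewrite IH, <- rsum_add. reflexivity.
Qed.

Lemma INR_list_sum_map_seq (F : nat -> nat) n :
  INR (list_sum (map F (seq 0 n))) = rsum (fun i => INR (F i)) n.
Proof.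
  induction n as [|n IH]; [reflexivity|].
  rewrite seq_S, map_app, list_sum_app, plus_INR, IH. simpl. rewrite Nat.add_0_r. lra.
Qed.

Lemma INR_countb_seq (P : nat -> bool) a n :
  INR (countb P (seq a n)) = rsum (fun i => b2R (P (a + i)%nat)) n.
Proof.
  induction n as [|n IH]; [reflexivity|].
  rewrite seq_S, countb_app, plus_INR, IH. unfold countb, b2R. simpl.
  destruct (P (a + n)%nat); simpl; lra.
Qed.

Lemma rsum_chebyshev (v z : nat -> R) m n :
  (forall i, 0 <= v i) -> (forall i, 0 <= z i) ->
  rsum (fun i => v i * z i) n * rsum (fun i => v i * z i ^ m) n <=
  rsum v n * rsum (fun i => v i * z i ^ S m) n.
Proof.
  intros Hv Hz. induction n as [|n IH]; simpl; [lra|].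
  assert (E : forall c, rsum (fun i => v i * ((z i - c) * (z i ^ m - c ^ m))) n =
    rsum (fun i => v i * z i ^ S m) n + c ^ S m * rsum v n
    - c ^ m * rsum (fun i => v i * z i) n - c * rsum (fun i => v i * z i ^ m) n).
  { intros c. clear IH. induction n as [|n IHn]; simpl; [ring|]. rewrite IHn. simpl. ring. }
  set (c := z n). specialize (E c).
  assert (0 <= rsum (fun i => v i * ((z i - c) * (z i ^ m - c ^ m))) n).
  { apply rsum_ge0. intros i _. apply Rmult_le_pos; auto.
    assert (Hc : 0 <= c) by apply Hz. pose proof (Hz i).
    destruct (Rle_dec (z i) c).
    - assert (z i ^ m <= c ^ m) by (apply pow_incr; lra).
      replace ((z i - c) * (z i ^ m - c ^ m)) with ((c - z i) * (c ^ m - z i ^ m)) by ring.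
      apply Rmult_le_pos; lra.
    - assert (c ^ m <= z i ^ m) by (apply pow_incr; lra). apply Rmult_le_pos; lra. }
  simpl in E, IH.
  set (P0 := rsum v n) in *. set (P1 := rsum (fun i => v i * z i) n) in *.
  set (Pm := rsum (fun i => v i * z i ^ m) n) in *.
  set (Pm1 := rsum (fun i => v i * (z i * z i ^ m)) n) in *.
  assert (0 <= v n) by auto.
  assert (v n * (P1 * c ^ m + c * Pm) <= v n * (P0 * (c * c ^ m) + Pm1))
    by (apply Rmult_le_compat_l; lra).
  nra.
Qed.

Lemma rsum_power_mean (v z : nat -> R) k n :
  (forall i, 0 <= v i) -> (forall i, 0 <= z i) ->
  rsum (fun i => v i * z i) n ^ S k <= rsum v n ^ k * rsum (fun i => v i * z i ^ S k) n.
Proof.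
  intros Hv Hz. induction k as [|k IH].
  - simpl. rewrite Rmult_1_r, Rmult_1_l. apply Req_le, rsum_ext. intros; ring.
  - set (P1 := rsum (fun i => v i * z i) n) in *.
    assert (0 <= P1) by (apply rsum_ge0; intros; apply Rmult_le_pos; auto).
    assert (0 <= rsum v n ^ k) by (apply pow_le, rsum_ge0; auto).
    pose proof (rsum_chebyshev v z (S k) n Hv Hz) as Ch. fold P1 in Ch.
    change (P1 ^ S (S k)) with (P1 * P1 ^ S k).
    apply Rle_trans with (P1 * (rsum v n ^ k * rsum (fun i => v i * z i ^ S k) n)).
    { apply Rmult_le_compat_l; auto. }
    apply Rle_trans with (rsum v n ^ k * (rsum v n * rsum (fun i => v i * z i ^ S (S k)) n)).
    { rewrite Rmult_comm, Rmult_assoc. apply Rmult_le_compat_l; auto.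
      rewrite Rmult_comm. exact Ch. }
    simpl; right; ring.
Qed.

(* Hölder's inequality with exponents [S k] and [S k / k], in the form
   [sum w c <= (sum v)^(k/(S k)) (sum c^(S k))^(1/(S k))] where [w^(S k) = v^k]. *)
Lemma rsum_holder (v w c : nat -> R) k n :
  (forall i, 0 < v i) -> (forall i, 0 <= w i) -> (forall i, 0 <= c i) ->
  (forall i, w i ^ S k = v i ^ k) ->
  rsum (fun i => w i * c i) n ^ S k <= rsum v n ^ k * rsum (fun i => c i ^ S k) n.
Proof.
  intros Hv Hw Hc Hwv.
  pose proof (rsum_power_mean v (fun i => w i * c i / v i) k n
    (fun i => Rlt_le _ _ (Hv i))
    (fun i => Rmult_le_pos _ _ (Rmult_le_pos _ _ (Hw i) (Hc i))
                (Rlt_le _ _ (Rinv_0_lt_compat _ (Hv i))))) as P.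
  rewrite (rsum_ext (fun i => v i * _) (fun i => w i * c i)) in P
    by (intros i _; specialize (Hv i); field; lra).
  rewrite (rsum_ext (fun i => v i * _ ^ S k) (fun i => c i ^ S k)) in P; auto.
  intros i _. specialize (Hv i). unfold Rdiv.
  rewrite !Rpow_mult_distr, Hwv, pow_inv. simpl. field.
  split; [apply pow_nonzero|]; lra.
Qed.

Lemma rsum_shift_le (G : nat -> R) s T Y :
  (forall a, 0 <= G a) -> (s <= T)%nat -> (T <= Y)%nat ->
  rsum (fun i => G (T + i)%nat) (Y - T) <= rsum (fun t => G (t + s)%nat) Y.
Proof.
  intros HG Hs HT. replace Y with ((T - s) + (Y - (T - s)))%nat at 2 by lia.
  rewrite rsum_add_range.
  assert (0 <= rsum (fun t => G (t + s)%nat) (T - s)) by (apply rsum_ge0; auto).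
  enough (rsum (fun i => G (T + i)%nat) (Y - T) <=
          rsum (fun i => G (T - s + i + s)%nat) (Y - (T - s))) by lra.
  apply Rle_trans with (rsum (fun i => G (T + i)%nat) (Y - (T - s))).
  - apply rsum_le_range; auto; lia.
  - right. apply rsum_ext. intros. f_equal. lia.
Qed.

Definition chg_const (g h : nat) : R := INR g + INR ((2 * (h * h)) ^ h).

Lemma chg_const_ge1 g h : (1 <= h)%nat -> 1 <= chg_const g h.
Proof.
  intros Hh. unfold chg_const. pose proof (pos_INR g).
  enough (1 <= INR ((2 * (h * h)) ^ h)) by lra.
  apply (le_INR 1). rewrite <- (Nat.pow_1_l h). apply Nat.pow_le_mono_l. nia.
Qed.

Section Windows.
Variable A : nat -> bool.

(* Each element [n] of [A] in [[T, Y)] lies in the windows [(t, t + T]] of all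
   [T] shifts [t] in [[n - T, n)], and [w t >= w n] there. *)
Lemma window_sum_le (w : nat -> R) T Y :
  (forall a, 0 <= w a) -> (forall a b, (a <= b)%nat -> w b <= w a) -> (T <= Y)%nat ->
  INR T * rsum (fun i => w (T + i)%nat * b2R (A (T + i)%nat)) (Y - T) <=
  rsum (fun t => INR (window_count A T t) * w t) Y.
Proof.
  intros Hw Hmono HTY.
  apply Rle_trans with (rsum (fun t => rsum (fun x => w t * b2R (A (t + (1 + x))%nat)) T) Y).
  2:{ right. apply rsum_ext. intros t _. unfold window_count.
      rewrite INR_countb_seq, Rmult_comm, <- rsum_scal. reflexivity. }
  rewrite rsum_swap, <- rsum_const. apply rsum_le. intros x Hx.
  apply Rle_trans with (rsum (fun t => w (t + (1 + x))%nat * b2R (A (t + (1 + x))%nat)) Y).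
  - apply rsum_shift_le with (G := fun a => w a * b2R (A a)); try lia.
    intros; apply Rmult_le_pos; auto using b2R_ge0.
  - apply rsum_le. intros t _. apply Rmult_le_compat_r; [apply b2R_ge0|]. apply Hmono. lia.
Qed.

Lemma window_weighted_sum_pow_le g k (v w : nat -> R) T Y : Chg (S k) g A ->
  (forall t, 0 < v t) -> (forall t, 0 <= w t) -> (forall a b, (a <= b)%nat -> w b <= w a) ->
  (forall t, w t ^ S k = v t ^ k) ->
  (1 <= T)%nat -> (T <= Y)%nat -> INR Y <= 2 * INR T ^ S k ->
  rsum (fun i => w (T + i)%nat * b2R (A (T + i)%nat)) (Y - T) ^ S k
  <= 2 * rsum v Y ^ k * chg_const g (S k).
Proof.
  intros HC Hv Hw Hmono Hwv HT HTY HY.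
  set (F := rsum _ (Y - T)).
  assert (HF : 0 <= F) by (apply rsum_ge0; intros; apply Rmult_le_pos; auto using b2R_ge0).
  assert (HT1 : 1 <= INR T) by now apply (le_INR 1).
  assert (HTk : 0 < INR T ^ S k) by (apply pow_lt; lra).
  assert (Hcore : rsum (fun t => INR (window_count A T t) ^ S k) Y <=
                  2 * INR g * INR T ^ S k + INR Y * INR ((2 * (S k * S k)) ^ S k)).
  { pose proof (sum_window_count_pow_le A (S k) g T Y ltac:(lia) HC) as H.
    apply le_INR in H. rewrite INR_list_sum_map_seq, plus_INR, !mult_INR, pow_INR in H.
    simpl (INR 2) in H. eapply Rle_trans; [|eapply Rle_trans; [apply H|right; ring]].
    right. apply rsum_ext. intros. symmetry. apply pow_INR. }
  assert (Hsum : (INR T * F) ^ S k <= rsum v Y ^ k * (2 * INR T ^ S k * chg_const g (S k))).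
  { eapply Rle_trans; [apply pow_incr; split; [apply Rmult_le_pos; lra|]; apply window_sum_le; auto|].
    rewrite (rsum_ext _ (fun t => w t * INR (window_count A T t))) by (intros; ring).
    eapply Rle_trans; [apply rsum_holder; auto using pos_INR|].
    apply Rmult_le_compat_l; [apply pow_le, rsum_ge0; intros; now apply Rlt_le|].
    eapply Rle_trans; [exact Hcore|]. unfold chg_const.
    pose proof (pos_INR ((2 * (S k * S k)) ^ S k)). nra. }
  rewrite Rpow_mult_distr in Hsum.
  apply Rmult_le_reg_l with (INR T ^ S k); auto.
  eapply Rle_trans; [exact Hsum|right; ring].
Qed.

End Windows.

Lemma pow2_ge1 j : (1 <= 2 ^ j)%nat.
Proof. pose proof (Nat.pow_nonzero 2 j). lia. Qed.

Lemma log2_add_pow2 J i : (i < 2 ^ J)%nat -> Nat.log2 (2 ^ J + i) = J.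
Proof. intros H. apply Nat.log2_unique' with i; lia. Qed.

Lemma rsum_half_pow_log2 J : rsum (fun t => (/ 2) ^ Nat.log2 t) (2 ^ J) = INR J + 1.
Proof.
  induction J as [|J IH]; [simpl; lra|].
  replace (2 ^ S J)%nat with (2 ^ J + 2 ^ J)%nat by (simpl; lia).
  rewrite rsum_add_range, IH.
  rewrite (rsum_ext _ (fun _ => (/ 2) ^ J)) by (intros; rewrite log2_add_pow2; auto).
  rewrite rsum_const, S_INR, pow_INR, pow_inv. simpl (INR 2).
  replace (1 + 1) with 2 by ring. rewrite Rinv_r; [ring|]. apply pow_nonzero. lra.
Qed.

Lemma le_of_pow_le x M n : 0 <= x -> 1 <= M -> x ^ S n <= M -> x <= M.
Proof.
  intros Hx HM H. destruct (Rle_dec x 1); [lra|].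
  enough (x <= x ^ S n) by lra.
  rewrite <- (pow_1 x) at 1. apply Rle_pow; lra || lia.
Qed.

Lemma pow_lt_pow_l a b n : 0 <= a < b -> a ^ S n < b ^ S n.
Proof.
  intros H. induction n as [|n IH]; [simpl; lra|].
  change (a * a ^ S n < b * b ^ S n).
  assert (0 <= a ^ S n) by (apply pow_le; lra). nra.
Qed.

Lemma pow_le_pow_inv a b n : 0 <= a -> 0 <= b -> b ^ S n <= a ^ S n -> b <= a.
Proof.
  intros Ha Hb H. destruct (Rle_dec b a) as [|Hlt]; auto.
  assert (a ^ S n < b ^ S n) by (apply pow_lt_pow_l; lra). lra.
Qed.

Lemma INR_unbounded (x : R) : exists n : nat, x < INR n.
Proof.
  destruct (archimed x) as [H _].
  destruct (Z_lt_le_dec (up x) 0) as [Hneg|Hpos].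
  - exists 0%nat. apply IZR_lt in Hneg. simpl. lra.
  - exists (Z.to_nat (up x)). now rewrite INR_IZR_INZ, Z2Nat.id.
Qed.

Lemma Rinv_sub_1_pos r : 0 < r < 1 -> 0 < / r - 1.
Proof. intros Hr. enough (1 < / r) by lra. rewrite <- Rinv_1. apply Rinv_lt_contravar; lra. Qed.

Lemma pow_le_pow_r_le1 (r : R) m n : 0 <= r <= 1 -> (m <= n)%nat -> r ^ n <= r ^ m.
Proof.
  intros Hr H. replace n with (m + (n - m))%nat by lia. rewrite pow_add.
  assert (0 <= r ^ m) by (apply pow_le; lra).
  assert (r ^ (n - m) <= 1) by (rewrite <- (pow1 (n - m)); apply pow_incr; lra). nra.
Qed.

Lemma Rpower_pow_mul x a n : 0 < x -> Rpower x a ^ n = Rpower x (a * INR n).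
Proof.
  intros Hx. rewrite <- Rpower_pow by (unfold Rpower; apply exp_pos).
  apply Rpower_mult.
Qed.

Lemma count_upto_rsum (A : nat -> bool) n :
  INR (count_upto A n) = rsum (fun i => b2R (A (1 + i)%nat)) n.
Proof. unfold count_upto. rewrite <- countb_length_filter. apply INR_countb_seq. Qed.

Section Dyadic.
Variables (A : nat -> bool) (g k : nat) (rho : R).
Hypothesis HC : Chg (S k) g A.
Hypothesis Hrho0 : 0 < rho.
Hypothesis Hrho1 : rho < 1.
Hypothesis Hrho : rho ^ S k = (/ 2) ^ k.

Local Notation K := (chg_const g (S k)).

Definition dyadic_count (j : nat) : R := INR (count_upto A (2 ^ j - 1)).

Definition block_count (j : nat) : R := rsum (fun i => b2R (A (2 ^ j + i)%nat)) (2 ^ j).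

Definition weighted_tail (p J : nat) : R :=
  rsum (fun i => rho ^ Nat.log2 (2 ^ p + i) * b2R (A (2 ^ p + i)%nat)) (2 ^ J - 2 ^ p).

Lemma dyadic_count_succ j : dyadic_count (S j) = dyadic_count j + block_count j.
Proof.
  unfold dyadic_count, block_count. rewrite !count_upto_rsum.
  pose proof (pow2_ge1 j).
  replace (2 ^ S j - 1)%nat with ((2 ^ j - 1) + 2 ^ j)%nat by (simpl; lia).
  rewrite rsum_add_range. f_equal. apply rsum_ext. intros. do 2 f_equal. lia.
Qed.

Lemma block_count_ge0 j : 0 <= block_count j.
Proof. apply rsum_ge0. intros. apply b2R_ge0. Qed.

Lemma rho_pow_pow j : (rho ^ j) ^ S k = / (2 ^ j) ^ k.
Proof.
  rewrite <- pow_mult, Nat.mul_comm, pow_mult, Hrho, <- pow_mult, pow_inv, <- pow_mult.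
  now rewrite Nat.mul_comm.
Qed.

Lemma rho_pow_block_count_le j : rho ^ j * block_count j <= 2 ^ S k * K.
Proof.
  assert (HK : 1 <= K) by (apply chg_const_ge1; lia).
  assert (HT : 0 < (2 ^ j) ^ k) by (apply pow_lt, pow_lt; lra).
  assert (Hb : block_count j ^ S k <= 2 * (2 ^ S j) ^ k * K).
  { assert (HY : (2 ^ S j - 2 ^ j = 2 ^ j)%nat) by (simpl; lia).
    pose proof (window_weighted_sum_pow_le A g k (fun _ => 1) (fun _ => 1) (2 ^ j) (2 ^ S j) HC)
      as H.
    rewrite HY, rsum_const, Rmult_1_r, !pow_INR in H. simpl (INR 2) in H.
    replace (1 + 1) with 2 in H by ring.
    unfold block_count.
    rewrite (rsum_ext _ (fun i => 1 * b2R (A (2 ^ j + i)%nat))) by (intros; ring).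
    apply H; intros; try lra.
    - now rewrite !pow1.
    - apply pow2_ge1.
    - simpl. lia.
    - assert (1 <= (2 ^ j) ^ k) by (apply pow_R1_Rle, pow_R1_Rle; lra).
      assert (0 < 2 ^ j) by (apply pow_lt; lra). simpl. nra. }
  apply le_of_pow_le with k.
  - apply Rmult_le_pos; [apply pow_le; lra|apply block_count_ge0].
  - assert (1 <= 2 ^ S k) by (apply pow_R1_Rle; lra). nra.
  - rewrite Rpow_mult_distr, rho_pow_pow.
    apply Rmult_le_reg_l with ((2 ^ j) ^ k); auto.
    rewrite <- Rmult_assoc, Rinv_r, Rmult_1_l by lra.
    eapply Rle_trans; [exact Hb|]. simpl. rewrite Rpow_mult_distr. right. ring.
Qed.

Definition boundary_const : R := 2 ^ S k * K * (rho / (1 - rho)).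

Lemma boundary_const_ge0 : 0 <= boundary_const.
Proof.
  unfold boundary_const. pose proof (chg_const_ge1 g (S k) ltac:(lia)).
  assert (0 < 2 ^ S k) by (apply pow_lt; lra).
  assert (0 < rho / (1 - rho)) by (apply Rdiv_lt_0_compat; lra).
  apply Rmult_le_pos; [apply Rmult_le_pos|]; lra.
Qed.

(* [rho^p A(2^p - 1) = sum_(j < p) rho^(p - j) (rho^j block_count j)] with bounded summands. *)
Lemma rho_pow_dyadic_count_le p : rho ^ p * dyadic_count p <= boundary_const.
Proof.
  pose proof boundary_const_ge0. unfold boundary_const in *.
  induction p as [|p IH].
  - unfold dyadic_count, count_upto. simpl (INR _). rewrite Rmult_0_r. exact H.
  - rewrite dyadic_count_succ. pose proof (rho_pow_block_count_le p).
    apply Rle_trans with (rho * (rho ^ p * dyadic_count p + rho ^ p * block_count p));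
      [right; simpl; ring|].
    apply Rle_trans with (rho * (2 ^ S k * K * (rho / (1 - rho)) + 2 ^ S k * K));
      [apply Rmult_le_compat_l; lra|].
    right. field. lra.
Qed.

Lemma weighted_tail_succ p J : (p <= J)%nat ->
  weighted_tail p (S J) = weighted_tail p J + rho ^ J * block_count J.
Proof.
  intros HpJ. unfold weighted_tail, block_count.
  assert (2 ^ p <= 2 ^ J)%nat by (apply Nat.pow_le_mono_r; lia).
  replace (2 ^ S J - 2 ^ p)%nat with ((2 ^ J - 2 ^ p) + 2 ^ J)%nat by (simpl; lia).
  rewrite rsum_add_range, <- rsum_scal. f_equal. apply rsum_ext. intros i Hi.
  replace (2 ^ p + (2 ^ J - 2 ^ p + i))%nat with (2 ^ J + i)%nat by lia.
  now rewrite log2_add_pow2.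
Qed.

(* Abel summation of the blocks [block_count j = dyadic_count (j+1) - dyadic_count j]. *)
Lemma weighted_tail_abel p d :
  weighted_tail p (p + d) + rho ^ p * dyadic_count p =
  rho ^ (p + d) * dyadic_count (p + d)
  + (/ rho - 1) * rsum (fun j => rho ^ (p + 1 + j) * dyadic_count (p + 1 + j)) d.
Proof.
  induction d as [|d IH].
  - unfold weighted_tail. rewrite Nat.add_0_r, Nat.sub_diag. simpl. ring.
  - rewrite Nat.add_succ_r, weighted_tail_succ by lia. simpl rsum.
    replace (p + 1 + d)%nat with (S (p + d)) by lia.
    rewrite dyadic_count_succ. simpl (rho ^ S (p + d)).
    enough (weighted_tail p (p + d) = rho ^ (p + d) * dyadic_count (p + d)
      + (/ rho - 1) * rsum (fun j => rho ^ (p + 1 + j) * dyadic_count (p + 1 + j)) d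
      - rho ^ p * dyadic_count p) as -> by (field; lra).
    lra.
Qed.

Lemma weighted_tail_pow_le p :
  weighted_tail p (S k * p) ^ S k <= 2 * (INR (S k * p) + 1) ^ k * K.
Proof.
  rewrite <- rsum_half_pow_log2.
  apply window_weighted_sum_pow_le with (w := fun t => rho ^ Nat.log2 t); auto.
  - intros. apply pow_lt. lra.
  - intros. apply pow_le. lra.
  - intros a b Hab. apply pow_le_pow_r_le1; [lra|]. now apply Nat.log2_le_mono.
  - intros t. now rewrite <- !pow_mult, Nat.mul_comm, pow_mult, Hrho, <- pow_mult, Nat.mul_comm.
  - apply pow2_ge1.
  - apply Nat.pow_le_mono_r; lia.
  - rewrite !pow_INR, <- pow_mult, (Nat.mul_comm p).
    pose proof (pow_le (INR 2) (S k * p) (pos_INR 2)). lra.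
Qed.


Lemma rho_pow_dyadic_count_ge (C : R) j : 0 <= C -> (2 <= j)%nat ->
  C ^ S k * INR (2 ^ j - 1) ^ k <= INR (count_upto A (2 ^ j - 1)) ^ S k * ln (INR (2 ^ j - 1)) ->
  C ^ S k * (/ 2) ^ k / INR j <= (rho ^ j * dyadic_count j) ^ S k.
Proof.
  intros HC0 Hj Hdens. fold (dyadic_count j) in Hdens.
  assert (H4 : 4 <= 2 ^ j) by (replace 4 with (2 ^ 2) by ring; apply Rle_pow; lra || lia).
  assert (EN : INR (2 ^ j - 1) = 2 ^ j - 1).
  { rewrite minus_INR, pow_INR by (pose proof (pow2_ge1 j); lia). reflexivity. }
  rewrite EN in Hdens.
  assert (Hln : ln (2 ^ j - 1) <= INR j).
  { apply Rle_trans with (ln (2 ^ j)); [left; apply ln_increasing; lra|].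
    rewrite ln_pow by lra.
    assert (ln 2 < 1) by (rewrite <- ln_exp; apply ln_increasing; pose proof (exp_ineq1 1); lra).
    pose proof ln_lt_2. pose proof (pos_INR j). nra. }
  assert (Hpow : C ^ S k * (2 ^ j / 2) ^ k <= dyadic_count j ^ S k * INR j).
  { assert (0 <= dyadic_count j ^ S k) by (apply pow_le, pos_INR).
    assert (0 <= C ^ S k) by (apply pow_le; auto).
    apply Rle_trans with (C ^ S k * (2 ^ j - 1) ^ k).
    - apply Rmult_le_compat_l; auto. apply pow_incr. lra.
    - eapply Rle_trans; [exact Hdens|]. now apply Rmult_le_compat_l. }
  rewrite Rpow_mult_distr, rho_pow_pow.
  assert (0 < (2 ^ j) ^ k) by (apply pow_lt; lra).
  assert (0 < INR j) by (apply lt_0_INR; lia).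
  apply Rmult_le_reg_r with ((2 ^ j) ^ k * INR j); [now apply Rmult_lt_0_compat|].
  replace (C ^ S k * (/ 2) ^ k / INR j * ((2 ^ j) ^ k * INR j)) with (C ^ S k * (2 ^ j / 2) ^ k)
    by (unfold Rdiv; rewrite (Rpow_mult_distr (2 ^ j)); field; lra).
  replace (/ (2 ^ j) ^ k * dyadic_count j ^ S k * ((2 ^ j) ^ k * INR j))
    with (dyadic_count j ^ S k * INR j) by (field; lra).
  exact Hpow.
Qed.

Lemma weighted_tail_ge (C y : R) N0 p : 0 <= C -> 0 <= y -> (1 <= p)%nat -> (N0 < 2 ^ p)%nat ->
  (forall N, (N0 <= N)%nat -> C ^ S k * INR N ^ k <= INR (count_upto A N) ^ S k * ln (INR N)) ->
  y ^ S k <= C ^ S k * (/ 2) ^ k / INR (S k * p) ->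
  (/ rho - 1) * (INR (S k * p - p) * y) - boundary_const <= weighted_tail p (S k * p).
Proof.
  intros HC0 Hy Hp HN0 Hdens Hyk.
  set (J := (S k * p)%nat).
  assert (Hterm : forall j, (p < j <= J)%nat -> y <= rho ^ j * dyadic_count j).
  { intros j Hj. apply pow_le_pow_inv with k; auto.
    { apply Rmult_le_pos; [apply pow_le; lra|apply pos_INR]. }
    eapply Rle_trans; [exact Hyk|].
    assert (Hpj : (2 ^ p <= 2 ^ j)%nat) by (apply Nat.pow_le_mono_r; lia).
    eapply Rle_trans; [|apply (rho_pow_dyadic_count_ge C j HC0); [lia|apply Hdens; lia]].
    unfold Rdiv. apply Rmult_le_compat_l.
    - apply Rmult_le_pos; apply pow_le; lra.
    - apply Rinv_le_contravar; [apply lt_0_INR; lia|apply le_INR; lia]. }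
  pose proof (weighted_tail_abel p (J - p)) as Habel.
  replace (p + (J - p))%nat with J in Habel by (unfold J; lia).
  pose proof (rho_pow_dyadic_count_le p).
  assert (0 <= rho ^ J * dyadic_count J) by (apply Rmult_le_pos; [apply pow_le; lra|apply pos_INR]).
  assert (INR (J - p) * y <= rsum (fun j => rho ^ (p + 1 + j) * dyadic_count (p + 1 + j)) (J - p)).
  { rewrite <- rsum_const. apply rsum_le. intros i Hi. apply Hterm. lia. }
  assert (0 < / rho - 1) by (apply Rinv_sub_1_pos; lra).
  nra.
Qed.

End Dyadic.

(* The lower bound, of order [(K/δ) J^(k/(k+1))] by the choice of [y], beats the upper
   bound [(2(J+1)^k K)^(1/(k+1))] once [J] is large. *)
Lemma tail_bounds_incompatible k (K B delta J y F : R) :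
  (1 <= k)%nat -> 1 <= K -> 0 <= B -> 0 < delta -> 1 <= J -> 2 ^ k * B ^ S k < J -> 0 <= y ->
  y ^ S k = (32 * K / delta) ^ S k * (/ 2) ^ k / J ->
  delta * (J / 2 * y) - B <= F -> F ^ S k <= 2 * (J + 1) ^ k * K -> False.
Proof.
  intros Hk HK HB Hd HJ HJB Hy Hyk Hlow Hup.
  set (u := delta * J * y / 4).
  assert (Hu0 : 0 <= u) by (unfold u; apply Rmult_le_pos; [apply Rmult_le_pos|]; nra).
  assert (Hh2 : 0 < (/ 2) ^ k) by (apply pow_lt; lra).
  assert (HP : 0 < J ^ k) by (apply pow_lt; lra).
  assert (Hu : u ^ S k = (8 * K) ^ S k * (/ 2) ^ k * J ^ k).
  { unfold u. replace (delta * J * y / 4) with (delta / 4 * J * y) by field.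
    rewrite Rpow_mult_distr, Hyk.
    replace ((delta / 4 * J) ^ S k * ((32 * K / delta) ^ S k * (/ 2) ^ k / J))
      with ((delta / 4 * J * (32 * K / delta)) ^ S k * (/ 2) ^ k / J)
      by (rewrite Rpow_mult_distr; field; lra).
    replace (delta / 4 * J * (32 * K / delta)) with (8 * K * J) by (field; lra).
    rewrite Rpow_mult_distr. simpl (J ^ S k). field. lra. }
  assert (H8K : 1 <= (8 * K) ^ S k) by (apply pow_R1_Rle; lra).
  assert (HBu : B <= u).
  { apply pow_le_pow_inv with k; auto. rewrite Hu.
    assert (J <= J ^ k) by (rewrite <- (pow_1 J) at 1; apply Rle_pow; lra || lia).
    assert (Hinv : (/ 2) ^ k * 2 ^ k = 1) by (rewrite <- Rpow_mult_distr, Rinv_l, pow1; lra).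
    assert (B ^ S k = (/ 2) ^ k * (2 ^ k * B ^ S k)) by (rewrite <- Rmult_assoc, Hinv; ring).
    assert ((/ 2) ^ k * J ^ k <= (8 * K) ^ S k * ((/ 2) ^ k * J ^ k)).
    { rewrite <- (Rmult_1_l ((/ 2) ^ k * J ^ k)) at 1.
      apply Rmult_le_compat_r; [apply Rmult_le_pos|]; lra. }
    nra. }
  assert (HuF : u ^ S k <= F ^ S k) by (apply pow_incr; unfold u in *; split; lra).
  assert (HJk : (J + 1) ^ k <= 2 ^ k * J ^ k)
    by (rewrite <- Rpow_mult_distr; apply pow_incr; lra).
  assert (H84 : 8 * K * 4 ^ k <= (8 * K) ^ S k).
  { simpl. apply Rmult_le_compat_l; [lra|].
    apply Rle_trans with (8 ^ k); [apply pow_incr; lra|].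
    rewrite Rpow_mult_distr. rewrite <- (Rmult_1_r (8 ^ k)) at 1.
    apply Rmult_le_compat_l; [apply pow_le; lra|]. now apply pow_R1_Rle. }
  assert (H42 : 4 ^ k * (/ 2) ^ k = 2 ^ k)
    by (rewrite <- Rpow_mult_distr; f_equal; field).
  set (Q := K * 4 ^ k * (/ 2) ^ k * J ^ k).
  assert (HQ : 0 < Q) by (unfold Q; repeat apply Rmult_lt_0_compat; try apply pow_lt; lra).
  assert (8 * Q <= 2 * Q).
  { apply Rle_trans with ((8 * K) ^ S k * ((/ 2) ^ k * J ^ k)).
    - replace (8 * Q) with (8 * K * 4 ^ k * ((/ 2) ^ k * J ^ k)) by (unfold Q; ring).
      apply Rmult_le_compat_r; [apply Rmult_le_pos|]; lra.
    - rewrite <- Rmult_assoc, <- Hu. eapply Rle_trans; [exact HuF|].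
      eapply Rle_trans; [exact Hup|].
      replace Q with (K * 2 ^ k * J ^ k) by (unfold Q; rewrite <- H42; ring). nra. }
  lra.
Qed.

Lemma not_eventually_dense (A : nat -> bool) g k rho N0 : (1 <= k)%nat -> Chg (S k) g A ->
  0 < rho -> rho < 1 -> rho ^ S k = (/ 2) ^ k ->
  let C := 32 * chg_const g (S k) / (/ rho - 1) in
  ~ (forall N, (N0 <= N)%nat ->
       C ^ S k * INR N ^ k <= INR (count_upto A N) ^ S k * ln (INR N)).
Proof.
  intros Hk HC Hrho0 Hrho1 Hrho C Hdens.
  set (K := chg_const g (S k)). set (B := boundary_const g k rho).
  assert (HK : 1 <= K) by (apply chg_const_ge1; lia).
  assert (Hdelta : 0 < / rho - 1) by (apply Rinv_sub_1_pos; lra).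
  assert (HC0 : 0 < C) by (unfold C; fold K; apply Rdiv_lt_0_compat; lra).
  destruct (INR_unbounded (2 ^ k * B ^ S k)) as [P HP].
  set (p := S (N0 + P)). set (J := (S k * p)%nat).
  assert (HJ1 : 1 <= INR J) by (apply (le_INR 1); unfold J, p; nia).
  assert (HJB : 2 ^ k * B ^ S k < INR J).
  { apply Rlt_le_trans with (INR P); auto. apply le_INR. unfold J, p. nia. }
  assert (HN0 : (N0 < 2 ^ p)%nat).
  { pose proof (Nat.pow_gt_lin_r 2 p ltac:(lia)). unfold p in *. lia. }
  set (Z := C ^ S k * (/ 2) ^ k / INR J).
  assert (HZ : 0 < Z).
  { apply Rdiv_lt_0_compat; [apply Rmult_lt_0_compat; apply pow_lt|]; lra. }
  set (y := Rpower Z (/ INR (S k))).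
  assert (Hy0 : 0 <= y) by (left; apply exp_pos).
  assert (Hy : y ^ S k = Z).
  { unfold y. rewrite Rpower_pow_mul, Rinv_l by (auto; apply not_0_INR; lia).
    now apply Rpower_1. }
  assert (HJp : INR J / 2 <= INR (J - p)).
  { rewrite minus_INR by (unfold J; nia). unfold J. rewrite mult_INR, S_INR.
    assert (1 <= INR k) by (apply (le_INR 1); lia). pose proof (pos_INR p). nra. }
  apply (tail_bounds_incompatible k K B (/ rho - 1) (INR J) y (weighted_tail A rho p J)
           Hk HK (boundary_const_ge0 g k rho Hrho0 Hrho1) Hdelta HJ1 HJB Hy0 Hy).
  - eapply Rle_trans; [|apply (weighted_tail_ge A g k rho HC Hrho0 Hrho1 Hrho C y N0 p);
                        try lra; try (unfold p; lia); auto].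
    + change (S k * p)%nat with J. fold B.
      assert (INR J / 2 * y <= INR (J - p) * y) by (apply Rmult_le_compat_r; lra).
      assert ((/ rho - 1) * (INR J / 2 * y) <= (/ rho - 1) * (INR (J - p) * y))
        by (apply Rmult_le_compat_l; lra).
      lra.
    + rewrite Hy. apply Rle_refl.
  - now apply weighted_tail_pow_le.
Qed.

Lemma exists_rho k : (1 <= k)%nat -> exists rho, 0 < rho < 1 /\ rho ^ S k = (/ 2) ^ k.
Proof.
  intros Hk. exists (Rpower (/ 2) (INR k / INR (S k))).
  assert (Hpow : Rpower (/ 2) (INR k / INR (S k)) ^ S k = (/ 2) ^ k).
  { rewrite Rpower_pow_mul by lra.
    replace (INR k / INR (S k) * INR (S k)) with (INR k) by (field; apply not_0_INR; lia).
    apply Rpower_pow. lra. }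
  split; auto. split; [apply exp_pos|].
  destruct (Rlt_le_dec (Rpower (/ 2) (INR k / INR (S k))) 1) as [|Hge]; auto.
  assert (1 <= (/ 2) ^ k) by (rewrite <- Hpow; now apply pow_R1_Rle).
  assert ((/ 2) ^ k < 1) by (apply pow_lt_1_compat; lra || lia).
  lra.
Qed.

Lemma count_upto_pow_ge (A : nat -> bool) k (C : R) N : (2 <= N)%nat -> 0 <= C ->
  C <= countR A (INR N) * Rpower (INR N * ln (INR N)) (1 / INR (S k)) / INR N ->
  C ^ S k * INR N ^ k <= INR (count_upto A N) ^ S k * ln (INR N).
Proof.
  intros HN HC0 Hdens.
  unfold countR in Hdens. rewrite Int_part_INR, Nat2Z.id in Hdens.
  set (c := INR (count_upto A N)) in *. set (x := INR N) in *.
  assert (Hx : 2 <= x) by (apply (le_INR 2); lia).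
  assert (Hln : 0 < ln x) by (rewrite <- ln_1; apply ln_increasing; lra).
  set (r := Rpower (x * ln x) (1 / INR (S k))) in *.
  assert (Hr0 : 0 < r) by apply exp_pos.
  assert (Hr : r ^ S k = x * ln x).
  { unfold r. rewrite Rpower_pow_mul by nra.
    replace (1 / INR (S k) * INR (S k)) with 1 by (field; apply not_0_INR; lia).
    apply Rpower_1. nra. }
  assert (H1 : C * x <= c * r).
  { apply Rmult_le_reg_r with (/ x); [apply Rinv_0_lt_compat; lra|].
    replace (C * x * / x) with C by (field; lra). exact Hdens. }
  assert (H2 : (C * x) ^ S k <= (c * r) ^ S k) by (apply pow_incr; nra).
  rewrite !Rpow_mult_distr, Hr in H2. change (x ^ S k) with (x * x ^ k) in H2.
  apply Rmult_le_reg_r with x; [lra|]. nra.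
Qed.

Theorem theorem3 (g h : nat) (Hh : (2 <= h)%nat) (Hgh : (h <= g)%nat) :
  exists C : R, 0 < C /\
    forall A : nat -> bool,
      A 0%nat = false -> infinite_set A -> Chg h g A ->
      liminf_le
        (fun x => countR A x * Rpower (x * ln x) (1 / INR h) / x) C.
Proof.
  destruct h as [|k]; [lia|].
  destruct (exists_rho k ltac:(lia)) as [rho [[Hrho0 Hrho1] Hrho]].
  set (C := 32 * chg_const g (S k) / (/ rho - 1)).
  assert (HC0 : 0 < C).
  { pose proof (chg_const_ge1 g (S k) ltac:(lia)). pose proof (Rinv_sub_1_pos rho ltac:(lra)).
    apply Rdiv_lt_0_compat; lra. }
  exists C. split; [exact HC0|].
  intros A _ _ HC eps Heps M. apply NNPP. intros Hnone.
  destruct (INR_unbounded M) as [N1 HN1].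
  apply (not_eventually_dense A g k rho (N1 + 2) ltac:(lia) HC Hrho0 Hrho1 Hrho).
  intros N HN.
  assert (HMN : M < INR N) by (apply Rlt_le_trans with (INR N1); [|apply le_INR]; lia || auto).
  apply count_upto_pow_ge; [lia|now left|]. fold C.
  apply Rnot_lt_le. intros Hlt. apply Hnone. exists (INR N). split; [exact HMN|lra].
Qed.
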